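(* Let $r$ be a Hermitian symmetric polynomial in one complex variable with $r(p,\overline p)=0$ for some $p\in\mathbb{C}$. If $r\in\mathcal{Q}'(1)$, then $r$ is divisible, as a polynomial in $z$ and $\overline z$, by $|z-p|^2=(z-p)(\overline z-\overline p)$.
   Context: $\mathcal{Q}'(1)$: Hermitian symmetric polynomials $r$ in one variable with $r(z,\overline z)\ge0$ for all $z$ for which there exist a Hermitian symmetric polynomial $s\ge0$, not identically $0$, and a holomorphic polynomial mapping $F$ with $rs=\|F\|^2$. *)

From HB Require Import structures.
From mathcomp Require Import all_boot all_order all_algebra.
From mathcomp Require Import complex.
From mathcomp Require Import Rstruct.
Set Implicit Arguments. Unset Strict Implicit. Unset Printing Implicit Defensive.
Import Order.TTheory GRing.Theory Num.Theory.
Local Open Scope ring_scope.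

Definition C : numClosedFieldType := (Rdefinitions.R)[i].

(** Polynomials in two variables z and w (w stands for \overline z):
    an element P : {poly {poly C}} is a polynomial in the OUTER variable w
    whose coefficients are polynomials in the INNER variable z. *)
Notation bipoly := {poly {poly C}}.

Definition bicoef (P : bipoly) (a b : nat) : C := (P`_b)`_a.

Definition herm_sym (P : bipoly) : Prop :=
  forall a b : nat, bicoef P a b = (bicoef P b a)^*.

Definition bieval (P : bipoly) (z w : C) : C :=
  (map_poly (fun q : {poly C} => q.[z]) P).[w].

Definition diag_eval (P : bipoly) (z : C) : C := bieval P z z^*.

Definition holo (f : {poly C}) : bipoly := f%:P.

Definition antiholo (f : {poly C}) : bipoly :=
  map_poly (fun c : C => (c^*)%:P) f.

Definition normsq (N : nat) (F : 'I_N -> {poly C}) : bipoly :=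
  \sum_(j < N) holo (F j) * antiholo (F j).

Definition diag_nonneg (P : bipoly) : Prop := forall z : C, 0 <= diag_eval P z.

Definition Qprime1 (r : bipoly) : Prop :=
  herm_sym r /\ diag_nonneg r /\
  exists s : bipoly, herm_sym s /\ diag_nonneg s /\ s != 0 /\
    exists (N : nat) (F : 'I_N -> {poly C}), r * s = normsq F.

Definition absdiff2 (p : C) : bipoly :=
  ('X - p%:P)%:P * ('X - (p^*)%:P%:P).

From HB Require Import structures.
From mathcomp Require Import all_boot all_order all_algebra.
Import Order.TTheory GRing.Theory Num.Theory.
Local Open Scope ring_scope.

(* Suppose r s = ||F||^2 with s != 0.  Evaluating on the diagonal at p gives
   sum_j |F_j(p)|^2 = 0, so every F_j vanishes at p and ||F||^2 = |z - p|^2 ||G||^2.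
   Thus r s vanishes on the two lines z = p and w = conj p.  By Hermitian symmetry,
   r vanishes on z = p iff it vanishes on w = conj p; so either |z - p|^2 divides r,
   or it divides s and we may replace s by s / |z - p|^2, which has smaller degree
   and still satisfies r s' = ||G||^2.  Descent on the degree of s concludes. *)

Section BivariateEvaluation.

Variable R : fieldType.
Implicit Types (P Q : {poly {poly R}}) (a b : R).

(* With z the inner and w the outer variable, [evalz a P] is P(a, w) and
   [evalw b P] is P(z, b). *)
Definition evalz a P : {poly R} := map_poly (horner_eval a) P.

Definition evalw b P : {poly R} := P.[b%:P].

Lemma evalzM a P Q : evalz a (P * Q) = evalz a P * evalz a Q.
Proof. by rewrite /evalz rmorphM. Qed.

Lemma evalwM b P Q : evalw b (P * Q) = evalw b P * evalw b Q.
Proof. by rewrite /evalw hornerM. Qed.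

Lemma evalz_eq0_dvd {a P} :
  evalz a P = 0 -> exists Q, P = Q * ('X - a%:P)%:P.
Proof.
move=> Pa0; exists (map_poly (fun q => q %/ ('X - a%:P)) P).
apply/polyP=> i; rewrite coefMC coef_map_id0 ?div0p //.
have : (evalz a P)`_i = 0 by rewrite Pa0 coef0.
rewrite /evalz coef_map /= => Pia0.
by rewrite divpK // dvdp_XsubCl; apply/eqP; rewrite -Pia0.
Qed.

Lemma evalzw_eq0_dvd a b P : evalz a P = 0 -> evalw b P = 0 ->
  exists Q, P = Q * (('X - a%:P)%:P * ('X - b%:P%:P)).
Proof.
move=> /evalz_eq0_dvd [Q1 ->].
rewrite evalwM {2}/evalw hornerC => /eqP.
rewrite mulf_eq0 polyXsubC_eq0 orbF => /eqP Q1b0.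
have /factor_theorem [Q2 ->] : root Q1 b%:P by rewrite /root -/(evalw _ _) Q1b0.
by exists Q2; rewrite -mulrA [_ * ('X - _)%:P]mulrC.
Qed.

End BivariateEvaluation.

Arguments evalz {R}.
Arguments evalw {R}.

Lemma evalz_absdiff2 p : evalz p (absdiff2 p) = 0.
Proof.
by rewrite /absdiff2 evalzM /evalz map_polyC /= /horner_eval hornerXsubC subrr mul0r.
Qed.

Lemma evalw_absdiff2 p : evalw p^* (absdiff2 p) = 0.
Proof. by rewrite /absdiff2 evalwM /evalw hornerXsubC subrr mulr0. Qed.

Lemma absdiff2_neq0 p : absdiff2 p != 0.
Proof. by rewrite /absdiff2 mulf_neq0 // ?polyC_eq0 polyXsubC_eq0. Qed.

Lemma size_absdiff2 p : size (absdiff2 p) = 2.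
Proof. by rewrite /absdiff2 size_Cmul ?polyXsubC_eq0 // size_XsubC. Qed.

Lemma herm_size_coef (r : bipoly) : herm_sym r -> forall a, leq (size r`_a) (size r).
Proof.
move=> r_herm a; apply/leq_sizeP => j /(nth_default 0) rj0.
by have := r_herm j a; rewrite /bicoef => ->; rewrite rj0 coef0 rmorph0.
Qed.

Lemma herm_evalw_conj (r : bipoly) p : herm_sym r ->
  evalw p^* r = map_poly Num.conj (evalz p r).
Proof.
move=> r_herm; apply/polyP=> a.
rewrite /evalw (horner_coef_wide _ (leqnn (size r))) coef_sum.
rewrite coef_map /evalz coef_map /= /horner_eval.
rewrite (horner_coef_wide _ (herm_size_coef _ r_herm a)) rmorph_sum.
apply: eq_bigr => i _; rewrite -(rmorphXn (@polyC C)) (@coefMC C) rmorphM rmorphXn /=.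
by have := r_herm a i; rewrite /bicoef => ->.
Qed.

Lemma herm_evalw_eq0 (r : bipoly) p : herm_sym r ->
  (evalw p^* r == 0) = (evalz p r == 0).
Proof. by move=> r_herm; rewrite herm_evalw_conj // map_poly_eq0. Qed.

Lemma absdiff2_dvd_herm_mul {r s : bipoly} {p} : herm_sym r ->
  evalz p (r * s) = 0 -> evalw p^* (r * s) = 0 ->
  (exists q, r = q * absdiff2 p) \/ (exists q, s = q * absdiff2 p).
Proof.
move=> r_herm /eqP rsz /eqP rsw; rewrite /absdiff2.
have [rz0 | rzN0] := eqVneq (evalz p r) 0.
  by left; apply: evalzw_eq0_dvd => //; apply/eqP; rewrite herm_evalw_eq0 // rz0.
move: rsz rsw; rewrite evalzM evalwM !mulf_eq0 herm_evalw_eq0 // (negbTE rzN0) /=.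
by move=> /eqP sz0 /eqP sw0; right; apply: evalzw_eq0_dvd.
Qed.

Lemma diag_evalE (P : bipoly) z : diag_eval P z = (evalz z P).[z^*].
Proof. by []. Qed.

Lemma diag_evalM (P Q : bipoly) z :
  diag_eval (P * Q) z = diag_eval P z * diag_eval Q z.
Proof. by rewrite !diag_evalE evalzM hornerM. Qed.

Lemma diag_eval_holo f z : diag_eval (holo f) z = f.[z].
Proof. by rewrite diag_evalE /evalz /holo map_polyC hornerC. Qed.

Lemma diag_eval_antiholo f z : diag_eval (antiholo f) z = (f.[z])^*.
Proof.
rewrite diag_evalE -horner_map; congr _.[_]; apply/polyP=> i.
by rewrite /evalz /antiholo !coef_map_id0 ?rmorph0 //= /horner_eval hornerC.
Qed.

Lemma diag_eval_normsq N (F : 'I_N -> {poly C}) z :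
  diag_eval (normsq F) z = \sum_(j < N) (F j).[z] * ((F j).[z])^*.
Proof.
rewrite /normsq diag_evalE /evalz rmorph_sum horner_sum; apply: eq_bigr => j _.
by rewrite -diag_evalE diag_evalM diag_eval_holo diag_eval_antiholo.
Qed.

Lemma antiholoE (f : {poly C}) : antiholo f = map_poly polyC (map_poly Num.conj f).
Proof. by rewrite /antiholo -map_poly_comp. Qed.

Lemma antiholoM (f g : {poly C}) : antiholo (f * g) = antiholo f * antiholo g.
Proof. by rewrite !antiholoE !rmorphM. Qed.

Lemma antiholo_XsubC p : antiholo ('X - p%:P) = 'X - (p^*)%:P%:P.
Proof. by rewrite antiholoE !rmorphB /= !map_polyX !map_polyC. Qed.

Lemma normsq_root_factor p N (F : 'I_N -> {poly C}) :
  (forall j, root (F j) p) ->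
  exists G : 'I_N -> {poly C}, normsq F = absdiff2 p * normsq G.
Proof.
move=> Fp0; exists (fun j => F j %/ ('X - p%:P)).
rewrite /normsq mulr_sumr; apply: eq_bigr => j _.
rewrite -{1 2}(divpK (_ : 'X - p%:P %| F j)) ?dvdp_XsubCl //.
by rewrite /holo rmorphM antiholoM antiholo_XsubC /absdiff2 mulrACA mulrC.
Qed.

Lemma normsq_diag_eq0_root N (F : 'I_N -> {poly C}) p :
  diag_eval (normsq F) p = 0 -> forall j, root (F j) p.
Proof.
rewrite diag_eval_normsq => sum0 j; rewrite /root -mul_conjC_eq0; apply/eqP.
by apply: (psumr_eq0P _ sum0) => // i _; rewrite mul_conjC_ge0.
Qed.

Lemma absdiff2_dvd_descent (r : bipoly) p : herm_sym r -> diag_eval r p = 0 ->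
  forall s : bipoly, s != 0 ->
  (exists N (F : 'I_N -> {poly C}), r * s = normsq F) ->
  exists q, r = q * absdiff2 p.
Proof.
move=> r_herm rp0 s; elim: {s}(size s) {-2}s (leqnn (size s)) => [|n IH] s.
  by rewrite leqn0 size_poly_eq0 => /eqP ->; rewrite eqxx.
move=> size_s s0 [N [F rsF]].
have /normsq_root_factor [G FG] : forall j, root (F j) p.
  by apply: normsq_diag_eq0_root; rewrite -rsF diag_evalM rp0 mul0r.
have rs_z : evalz p (r * s) = 0 by rewrite rsF FG evalzM evalz_absdiff2 mul0r.
have rs_w : evalw p^* (r * s) = 0 by rewrite rsF FG evalwM evalw_absdiff2 mul0r.
have [//|[s' Es]] := absdiff2_dvd_herm_mul r_herm rs_z rs_w.
have s'0 : s' != 0 by apply: contraNneq s0 => s'_eq0; rewrite Es s'_eq0 mul0r.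
apply: (IH s') => //.
  by move: size_s; rewrite Es size_mul ?absdiff2_neq0 // size_absdiff2 addn2.
exists N, G; apply: (mulIf (absdiff2_neq0 p)).
by rewrite -mulrA -Es rsF FG mulrC.
Qed.

Theorem lemma4p2 (r : bipoly) (p : C) :
  herm_sym r -> diag_eval r p = 0 -> Qprime1 r ->
  exists q : bipoly, r = q * absdiff2 p.
Proof.
move=> r_herm rp0 [_ [_ [s [_ [_ [s0 rs_normsq]]]]]].
exact: absdiff2_dvd_descent r_herm rp0 s s0 rs_normsq.
Qed.
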